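(* Let $n\geq 1$ and consider $2n$ qubits labeled $(-,i)$ and $(+,j)$ for $i,j\in\{1,\dots,n\}$, with Hilbert space $\mathcal{H}=(\mathbb{C}^2)^{\otimes 2n}$. For $i,j\in\{1,\dots,n\}$ let $|\psi_1\rangle^{ij}=\tfrac{1}{\sqrt2}(|00\rangle+|11\rangle)$, $|\psi_2\rangle^{ij}=\tfrac{1}{\sqrt2}(|01\rangle+|10\rangle)$, $|\psi_3\rangle^{ij}=\tfrac{1}{\sqrt2}(|00\rangle-|11\rangle)$, $|\psi_4\rangle^{ij}=\tfrac{1}{\sqrt2}(|01\rangle-|10\rangle)$, where the two tensor factors are the qubits $(-,i)$ and $(+,j)$, and let $E^{ij}_a=|\psi_a\rangle\langle\psi_a|^{ij}$ (acting as the identity on all other qubits), $a=1,\dots,4$. Then the algebra $\mathcal{D}$ generated by $\{E^{ij}_a : i,j=1,\dots,n;\ a=1,\dots,4\}$ contains no non-trivial local operator, i.e.\ no operator acting non-trivially on only a single qubit $(-,i)$ or $(+,j)$ (an operator of the form $A$ on that qubit tensored with the identity elsewhere, with $A$ not a multiple of the identity). *)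

(* Operators on (C^2)^{⊗2n} as square matrices over algC,
   indexed by the computational basis = functions from qubits to bool. *)
From HB Require Import structures.
From mathcomp Require Import all_boot all_order all_algebra all_field.
Set Implicit Arguments. Unset Strict Implicit. Unset Printing Implicit Defensive.
Import Order.TTheory GRing.Theory Num.Theory.
Local Open Scope ring_scope.

(* qubits: (false, i) is qubit (-,i); (true, j) is qubit (+,j) *)
Definition qubit (n : nat) := (bool * 'I_n)%type.
Definition basis (n : nat) := {ffun qubit n -> bool}.

Definition op (n : nat) := 'M[algC]_(#|{: basis n}|).

Definition mxop (n : nat) (f : basis n -> basis n -> algC) : op n :=
  \matrix_(i, j) f (enum_val i) (enum_val j).

Definition b2o (b : bool) : 'I_2 := inord (nat_of_bool b).

Definition agree_off (n : nat) (P : pred (qubit n)) (s t : basis n) : bool :=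
  [forall q, ~~ P q ==> (s q == t q)].

Definition local (n : nat) (q : qubit n) (A : 'M[algC]_2) : op n :=
  mxop (fun s t => A (b2o (s q)) (b2o (t q)) *
                   (agree_off (pred1 q) s t)%:R).

(* unnormalised Bell vectors (times sqrt 2), on two bits (x,y) where
   x = qubit (-,i) and y = qubit (+,j); a = 0,1,2,3 stands for psi_1..psi_4 *)
Definition bell (a : 'I_4) (x y : bool) : algC :=
  match val a with
  | 0 => (x == y)%:R
  | 1 => (x != y)%:R
  | 2 => if x == y then (if x then -1 else 1) else 0
  | _ => if x != y then (if x then -1 else 1) else 0
  end.

Definition Eproj (n : nat) (i j : 'I_n) (a : 'I_4) : op n :=
  mxop (fun s t =>
    bell a (s (false, i)) (s (true, j)) * (bell a (t (false, i)) (t (true, j)))^*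
      / 2%:R *
    (agree_off (fun q => (q == (false, i)) || (q == (true, j))) s t)%:R).

Inductive gen_alg (n : nat) (G : op n -> Prop) : op n -> Prop :=
  | ga_gen M : G M -> gen_alg G M
  | ga_one : gen_alg G 1%:M
  | ga_add M N : gen_alg G M -> gen_alg G N -> gen_alg G (M + N)
  | ga_scale (c : algC) M : gen_alg G M -> gen_alg G (c *: M)
  | ga_mul M N : gen_alg G M -> gen_alg G N -> gen_alg G (M *m N).

Definition Dalg (n : nat) : op n -> Prop :=
  gen_alg (fun M => exists (i j : 'I_n) (a : 'I_4), M = Eproj i j a).

From mathcomp Require Import all_boot all_order all_algebra all_field.
Set Implicit Arguments. Unset Strict Implicit. Unset Printing Implicit Defensive.
Import Order.TTheory GRing.Theory Num.Theory.
Local Open Scope ring_scope.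

(* Let X and Z be the Pauli matrices.  Each Bell state is a joint eigenvector
   of X (x) X and Z (x) Z, so every projector E^{ij}_a commutes with the global
   operators X^{(x)2n} and Z^{(x)2n}, and hence so does every element of the
   algebra they generate.  An operator A acting on a single qubit commutes with
   X^{(x)2n} and Z^{(x)2n} only if A commutes with X and Z, i.e. only if A is
   a scalar. *)

Lemma gen_alg_comm (n : nat) (G : op n -> Prop) (B M : op n) :
  (forall N, G N -> N *m B = B *m N) -> gen_alg G M -> M *m B = B *m M.
Proof.
move=> GB; elim=> {M} [M /GB // | | M N _ eM _ eN | c M _ eM | M N _ eM _ eN].
- by rewrite mul1mx mulmx1.
- by rewrite mulmxDl mulmxDr eM eN.
- by rewrite -scalemxAl -scalemxAr eM.
- by rewrite -mulmxA eN !mulmxA eM.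
Qed.

Lemma sum_mulr_delta (T : finType) (R : pzSemiRingType) (F : T -> R) (c : T) :
  \sum_t F t * (t == c)%:R = F c.
Proof.
rewrite (bigD1 c) //= eqxx mulr1 big1 ?addr0 // => t /negbTE ->.
by rewrite mulr0.
Qed.

Lemma sum_delta_mull (T : finType) (R : pzSemiRingType) (F : T -> R) (c : T) :
  \sum_t (c == t)%:R * F t = F c.
Proof.
rewrite (bigD1 c) //= eqxx mul1r big1 ?addr0 // => t.
by rewrite eq_sym => /negbTE ->; rewrite mul0r.
Qed.

Lemma b2o_inj : injective b2o.
Proof. by do 2![case] => // /(congr1 val); rewrite /= !inordK. Qed.

Lemma b2o_surj (k : 'I_2) : exists x, k = b2o x.
Proof.
exists (val k == 1%N).
by case: k => [[|[|m]] lt_k2] //; apply/val_inj; rewrite /= inordK.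
Qed.

Lemma scalar2_pauli (A : 'M[algC]_2) :
  (forall x y, A (b2o (~~ x)) (b2o (~~ y)) = A (b2o x) (b2o y)) ->
  (forall x, A (b2o x) (b2o (~~ x)) = 0) ->
  A = (A (b2o false) (b2o false))%:M.
Proof.
move=> AX AZ; apply/matrixP => k l.
have [[x ->] [y ->]] := (b2o_surj k, b2o_surj l).
case: x; case: y; rewrite mxE (inj_eq b2o_inj) /= ?mulr1n ?mulr0n //.
exact: AX false false.
Qed.

Lemma bell_negb (a : 'I_4) x y :
  bell a (~~ x) (~~ y) = (-1) ^+ (2 <= a)%N * bell a x y.
Proof.
by case: a => [[|[|[|[|m]]]] lt_a4] //; case: x; case: y;
  rewrite /bell /= ?expr0 ?expr1 ?mul1r ?mulN1r ?opprK ?oppr0.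
Qed.

Lemma bell_eq0 (a : 'I_4) x y : x (+) y != odd a -> bell a x y = 0.
Proof. by case: a => [[|[|[|[|m]]]] lt_a4] //; case: x; case: y. Qed.

Section GlobalPaulis.
Variable n : nat.
Implicit Types (s t u : basis n) (f g : basis n -> basis n -> algC).

Lemma mxop_mul f g : mxop f *m mxop g = mxop (fun s u => \sum_t f s t * g t u).
Proof.
apply/matrixP=> i k; rewrite !mxE.
rewrite (big_enum_val (A := predT) (fun t => f (enum_val i) t * g t (enum_val k))).
by apply: eq_bigr => j _; rewrite !mxE.
Qed.

Lemma eq_mxop f g : (forall s u, f s u = g s u) -> mxop f = mxop g.
Proof. by move=> fg; apply/matrixP=> i k; rewrite !mxE fg. Qed.

Lemma mxop_inj f g : mxop f = mxop g -> forall s u, f s u = g s u.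
Proof.
move=> /matrixP fg s u; have := fg (enum_rank s) (enum_rank u).
by rewrite !mxE !enum_rankK.
Qed.

Definition bitflip s : basis n := [ffun q => ~~ s q].

Lemma bitflipK : involutive bitflip.
Proof. by move=> s; apply/ffunP=> q; rewrite !ffunE negbK. Qed.

Definition Xall : op n := mxop (fun s t => (t == bitflip s)%:R).

Definition zsign s : algC := \prod_q (-1) ^+ s q.

Definition Zall : op n := mxop (fun s t => (s == t)%:R * zsign s).

Lemma mxop_commX f :
  mxop f *m Xall = Xall *m mxop f <->
  forall s u, f (bitflip s) (bitflip u) = f s u.
Proof.
have -> : mxop f *m Xall = mxop (fun s u => f s (bitflip u)).
  rewrite mxop_mul; apply: eq_mxop => s u.
  under eq_bigr => t _ do rewrite eq_sym (can2_eq bitflipK bitflipK).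
  exact: sum_mulr_delta.
have -> : Xall *m mxop f = mxop (fun s u => f (bitflip s) u).
  rewrite mxop_mul; apply: eq_mxop => s u.
  under eq_bigr => t _ do rewrite eq_sym.
  exact: sum_delta_mull.
split=> [/mxop_inj fX s u | fX]; last by apply: eq_mxop => s u; rewrite -fX bitflipK.
by rewrite fX bitflipK.
Qed.

Lemma mxop_commZ f :
  mxop f *m Zall = Zall *m mxop f <->
  forall s u, f s u * zsign u = zsign s * f s u.
Proof.
have -> : mxop f *m Zall = mxop (fun s u => f s u * zsign u).
  rewrite mxop_mul; apply: eq_mxop => s u.
  under eq_bigr => t _ do rewrite mulrA mulrAC.
  exact: (sum_mulr_delta (fun t => f s t * zsign t)).
have -> : Zall *m mxop f = mxop (fun s u => zsign s * f s u).
  rewrite mxop_mul; apply: eq_mxop => s u.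
  under eq_bigr => t _ do rewrite -mulrA.
  exact: (sum_delta_mull (fun t => zsign s * f t u)).
by split=> [/mxop_inj | /eq_mxop].
Qed.

Lemma agree_off_bitflip (P : pred (qubit n)) s u :
  agree_off P (bitflip s) (bitflip u) = agree_off P s u.
Proof.
by apply: eq_forallb => q; rewrite !ffunE; case: (s q); case: (u q).
Qed.

Lemma zsign_pair (a b : qubit n) s : a != b ->
  zsign s = (-1) ^+ (s a (+) s b) * \prod_(q | (q != a) && (q != b)) (-1) ^+ s q.
Proof.
move=> ab; rewrite /zsign (bigD1 a) //= (bigD1 b) 1?eq_sym //= mulrA signr_addb.
by congr (_ * _); apply: eq_bigl => q; rewrite andbC.
Qed.

Lemma Eproj_commX (i j : 'I_n) (a : 'I_4) : Eproj i j a *m Xall = Xall *m Eproj i j a.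
Proof.
apply/mxop_commX => s u; rewrite !ffunE agree_off_bitflip !bell_negb rmorphM.
by rewrite rmorph_sign mulrACA -signr_addb addbb mul1r.
Qed.

Lemma Eproj_commZ (i j : 'I_n) (a : 'I_4) : Eproj i j a *m Zall = Zall *m Eproj i j a.
Proof.
apply/mxop_commZ => s u.
set x := s (false, i); set y := s (true, j).
set x' := u (false, i); set y' := u (true, j).
set P := (fun q : qubit n => (q == (false, i)) || (q == (true, j))).
have [xy | xy] := eqVneq (x (+) y) (odd a); last first.
  by rewrite (bell_eq0 xy) !mul0r mulr0.
have [xy' | xy'] := eqVneq (x' (+) y') (odd a); last first.
  by rewrite (bell_eq0 xy') conjC0 mulr0 !mul0r mulr0.
have [offP | _] := boolP (agree_off P s u); last by rewrite !mulr0 mul0r.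
(* on the pair both s and u have parity odd a, off it they agree *)
rewrite mulrC; congr (_ * _).
have ab : (false, i) != (true, j) :> qubit n by [].
rewrite (zsign_pair u ab) (zsign_pair s ab) xy xy'; congr (_ * _).
apply: eq_bigr => q /andP[qi qj]; move/forallP/(_ q)/implyP: offP.
by rewrite /P (negbTE qi) (negbTE qj) => /(_ isT)/eqP->.
Qed.

Definition basis1 (q : qubit n) (x : bool) : basis n :=
  [ffun r => if r == q then x else false].

Lemma agree_off_basis1 (q : qubit n) x y : agree_off (pred1 q) (basis1 q x) (basis1 q y).
Proof. by apply/forallP => r; apply/implyP => /= rq; rewrite !ffunE (negbTE rq). Qed.

Lemma zsign_basis1 (q : qubit n) x : zsign (basis1 q x) = (-1) ^+ x.
Proof.
rewrite /zsign (bigD1 q) //= ffunE eqxx big1 ?mulr1 // => r rq.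
by rewrite ffunE (negbTE rq).
Qed.

Lemma local_comm_scalar (q : qubit n) (A : 'M[algC]_2) :
  local q A *m Xall = Xall *m local q A -> local q A *m Zall = Zall *m local q A ->
  exists c, A = c%:M.
Proof.
move=> /mxop_commX AX /mxop_commZ AZ; exists (A (b2o false) (b2o false)).
apply: scalar2_pauli => [x y | x].
  have := AX (basis1 q x) (basis1 q y).
  by rewrite agree_off_bitflip agree_off_basis1 !ffunE eqxx mulr1n !mulr1.
have := AZ (basis1 q x) (basis1 q (~~ x)).
rewrite agree_off_basis1 !zsign_basis1 !ffunE eqxx mulr1n mulr1 mulrC signrN mulNr.
by move/eqP; rewrite eqNr mulf_eq0 signr_eq0 => /eqP.
Qed.

End GlobalPaulis.

Theorem lemma4 (n : nat) (hn : (1 <= n)%N) :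
  ~ (exists (q : qubit n) (A : 'M[algC]_2),
       Dalg (local q A) /\ ~ (exists c : algC, A = c%:M)).
Proof.
move=> [q [A [DA nonscalarA]]]; apply: nonscalarA; apply: local_comm_scalar.
- by apply: (gen_alg_comm _ DA) => _ [i [j [a ->]]]; apply: Eproj_commX.
- by apply: (gen_alg_comm _ DA) => _ [i [j [a ->]]]; apply: Eproj_commZ.
Qed.
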